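(* Let $n\ge5$ and $c\ge1$. Then the commutator subgroup $UW_n(c)'$ is perfect, i.e. $[UW_n(c)',UW_n(c)']=UW_n(c)'$.
   Context: $UV_n(c)$ ($n\ge2$, $c\ge1$) is the group with generators $\rho_i$ ($1\le i\le n-1$), $\sigma_{i,t}$ ($1\le i\le n-1$, $1\le t\le c$) and relations $\rho_i\rho_{i+1}\rho_i=\rho_{i+1}\rho_i\rho_{i+1}$ ($1\le i\le n-2$), $\rho_i\rho_j=\rho_j\rho_i$ ($|i-j|\ge2$), $\rho_i^2=1$, $\sigma_{i,t}\sigma_{j,\ell}=\sigma_{j,\ell}\sigma_{i,t}$ ($|i-j|\ge2$, $1\le t,\ell\le c$), $\sigma_{i,t}\rho_j=\rho_j\sigma_{i,t}$ ($|i-j|\ge2$), $\rho_i\rho_{i+1}\sigma_{i,t}=\sigma_{i+1,t}\rho_i\rho_{i+1}$ ($1\le i\le n-2$, $1\le t\le c$). The universal welded braid group $UW_n(c)$ is the quotient of $UV_n(c)$ by the additional relations $\rho_i\sigma_{i+1,t}\sigma_{i,t}=\sigma_{i+1,t}\sigma_{i,t}\rho_{i+1}$ for all $1\le i\le n-2$, $1\le t\le c$. *)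

(* the universal welded braid group UW_n(c) given by its
   presentation, realised as words in the generators modulo the congruence
   generated by free cancellation and the defining relations. *)
From Stdlib Require Import List Arith.
Import ListNotations.

Inductive gen : Type := Rho (i : nat) | Sig (i t : nat).

(* A letter is a generator with an exponent flag: false = g, true = g^{-1}. *)
Definition letter : Type := (gen * bool)%type.
Definition word : Type := list letter.

Definition valid_gen (n c : nat) (g : gen) : Prop :=
  match g with
  | Rho i => 1 <= i <= n - 1
  | Sig i t => 1 <= i <= n - 1 /\ 1 <= t <= c
  end.

Definition valid_word (n c : nat) (w : word) : Prop :=
  Forall (fun l => valid_gen n c (fst l)) w.

Definition rr (i : nat) : word := [(Rho i, false)].
Definition ss (i t : nat) : word := [(Sig i t, false)].

Inductive uv_rel (n c : nat) : word -> word -> Prop :=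
| R_braid i : 1 <= i -> i <= n - 2 ->
    uv_rel n c (rr i ++ rr (S i) ++ rr i) (rr (S i) ++ rr i ++ rr (S i))
| R_far i j : 1 <= i <= n - 1 -> 1 <= j <= n - 1 -> (i + 2 <= j \/ j + 2 <= i) ->
    uv_rel n c (rr i ++ rr j) (rr j ++ rr i)
| R_inv i : 1 <= i <= n - 1 ->
    uv_rel n c (rr i ++ rr i) []
| R_sfar i t j l : 1 <= i <= n - 1 -> 1 <= j <= n - 1 -> (i + 2 <= j \/ j + 2 <= i) ->
    1 <= t <= c -> 1 <= l <= c ->
    uv_rel n c (ss i t ++ ss j l) (ss j l ++ ss i t)
| R_mixfar i t j : 1 <= i <= n - 1 -> 1 <= j <= n - 1 -> (i + 2 <= j \/ j + 2 <= i) ->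
    1 <= t <= c ->
    uv_rel n c (ss i t ++ rr j) (rr j ++ ss i t)
| R_mix i t : 1 <= i -> i <= n - 2 -> 1 <= t <= c ->
    uv_rel n c (rr i ++ rr (S i) ++ ss i t) (ss (S i) t ++ rr i ++ rr (S i)).

Inductive uw_rel (n c : nat) : word -> word -> Prop :=
| UW_uv a b : uv_rel n c a b -> uw_rel n c a b
| UW_weld i t : 1 <= i -> i <= n - 2 -> 1 <= t <= c ->
    uw_rel n c (rr i ++ ss (S i) t ++ ss i t) (ss (S i) t ++ ss i t ++ rr (S i)).

Inductive uw_eq (n c : nat) : word -> word -> Prop :=
| E_rel u v a b : uw_rel n c a b -> uw_eq n c (u ++ a ++ v) (u ++ b ++ v)
| E_free u v g e : valid_gen n c g ->
    uw_eq n c (u ++ (g, e) :: (g, negb e) :: v) (u ++ v)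
| E_refl w : uw_eq n c w w
| E_sym w1 w2 : uw_eq n c w1 w2 -> uw_eq n c w2 w1
| E_trans w1 w2 w3 : uw_eq n c w1 w2 -> uw_eq n c w2 w3 -> uw_eq n c w1 w3.

Definition winv (w : word) : word := rev (map (fun l => (fst l, negb (snd l))) w).

Definition comm (u v : word) : word := winv u ++ winv v ++ u ++ v.

(* Since [a,b]^{-1} = [b,a], this is the subgroup generated by commutators. *)
Definition comm_subgroup (n c : nat) (H : word -> Prop) (w : word) : Prop :=
  valid_word n c w /\
  exists ps : list (word * word),
    Forall (fun p => H (fst p) /\ H (snd p)) ps /\
    uw_eq n c w (flat_map (fun p => comm (fst p) (snd p)) ps).

Definition derived (n c : nat) : word -> Prop :=
  comm_subgroup n c (valid_word n c).

From Stdlib Require Import List Arith Lia.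
Import ListNotations.

(* Write D for UW_n(c)' and x ≡ y for x y^-1 ∈ [D, D]; since [D, D] is normal,
   ≡ is a congruence.  Every product rho_a rho_b lies in D, so for indices k, k'
   far from i and i + 1 the commutator [rho_i rho_k, rho_(i+1) rho_k'] lies in
   [D, D]; conjugated by rho_k rho_k' it becomes (rho_i rho_(i+1))^2, and as
   (rho_i rho_(i+1))^3 = 1 by the braid relation, rho_i rho_(i+1) is its square.
   Hence rho_i ≡ rho_(i+1), and the relation rho_i rho_(i+1) sigma_(i,t) =
   sigma_(i+1,t) rho_i rho_(i+1) then gives sigma_(i,t) ≡ sigma_(i+1,t).  So any
   two generators are congruent to generators of indices 1 and 3, which commute:
   UW_n(c)/[D, D] is abelian, i.e. D ⊆ [D, D].  Room for k and k' is what needs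
   n >= 5. *)

Notation rho i := (Rho i, false).
Notation sig i t := (Sig i t, false).

Definition comm_prod (ps : list (word * word)) : word :=
  flat_map (fun p => comm (fst p) (snd p)) ps.

Lemma winv_app a b : winv (a ++ b) = winv b ++ winv a.
Proof. unfold winv. now rewrite map_app, rev_app_distr. Qed.

Lemma winv_involutive a : winv (winv a) = a.
Proof.
  induction a as [|[g e] a IH]; [reflexivity|].
  change (winv ((g, e) :: a)) with (winv a ++ [(g, negb e)]).
  rewrite winv_app, IH. simpl. now rewrite Bool.negb_involutive.
Qed.

Lemma winv_comm a b : winv (comm a b) = comm b a.
Proof. unfold comm. rewrite !winv_app, !winv_involutive. now rewrite <- !app_assoc. Qed.

Lemma winv_comm_prod ps :
  winv (comm_prod ps) = comm_prod (rev (map (fun p => (snd p, fst p)) ps)).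
Proof.
  induction ps as [|[a b] ps IH]; [reflexivity|].
  unfold comm_prod in *. simpl. rewrite flat_map_app, winv_app, IH, winv_comm.
  simpl. now rewrite app_nil_r.
Qed.

Section UniversalWeldedBraidGroup.

Variables n c : nat.

Lemma valid_app a b :
  valid_word n c a -> valid_word n c b -> valid_word n c (a ++ b).
Proof. intros. now apply Forall_app. Qed.

Lemma valid_app_inv a b :
  valid_word n c (a ++ b) -> valid_word n c a /\ valid_word n c b.
Proof. apply Forall_app. Qed.

Lemma valid_winv a : valid_word n c a -> valid_word n c (winv a).
Proof.
  intros Ha. apply Forall_rev, Forall_map.
  eapply Forall_impl; [|exact Ha]. auto.
Qed.

Lemma valid_winv_inv a : valid_word n c (winv a) -> valid_word n c a.
Proof. intros H. rewrite <- (winv_involutive a). now apply valid_winv. Qed.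

Lemma valid_comm a b :
  valid_word n c a -> valid_word n c b -> valid_word n c (comm a b).
Proof. intros. unfold comm. repeat apply valid_app; auto using valid_winv. Qed.

Ltac solve_valid :=
  unfold valid_word; repeat (apply Forall_cons || apply Forall_nil); simpl; lia.

Lemma uw_eq_app_l u a b : uw_eq n c a b -> uw_eq n c (u ++ a) (u ++ b).
Proof.
  induction 1 as [u' v| | | |].
  - rewrite !app_assoc, <- !(app_assoc (u ++ u')). now constructor.
  - rewrite !app_assoc. now constructor.
  - apply E_refl.
  - now apply E_sym.
  - eapply E_trans; eauto.
Qed.

Lemma uw_eq_app_r v a b : uw_eq n c a b -> uw_eq n c (a ++ v) (b ++ v).
Proof.
  induction 1.
  - rewrite <- !app_assoc. now constructor.
  - rewrite <- !app_assoc. simpl. now constructor.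
  - apply E_refl.
  - now apply E_sym.
  - eapply E_trans; eauto.
Qed.

Lemma uw_eq_app a b a' b' :
  uw_eq n c a b -> uw_eq n c a' b' -> uw_eq n c (a ++ a') (b ++ b').
Proof. intros. eapply E_trans; [apply uw_eq_app_r | apply uw_eq_app_l]; eassumption. Qed.

Lemma uw_eq_splice k m a b w w' :
  uw_eq n c a b -> firstn m (skipn k w) = a ->
  uw_eq n c (firstn k w ++ b ++ skipn (k + m) w) w' -> uw_eq n c w w'.
Proof.
  intros Hab Ha H. eapply E_trans; [|exact H].
  assert (Hw : w = firstn k w ++ a ++ skipn (k + m) w).
  { rewrite <- Ha, Nat.add_comm, <- skipn_skipn, !firstn_skipn. reflexivity. }
  rewrite Hw at 1. now apply uw_eq_app_l, uw_eq_app_r.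
Qed.

(* [rw_at k m H] rewrites, with [H : uw_eq n c a b], the block [a] made of the
   [m] letters starting at position [k] of the left-hand word of the goal;
   [rw_at_rhs] does the same in the right-hand word. *)
Ltac rw_at k m H :=
  eapply (uw_eq_splice k m _ _ _ _ H); [reflexivity | cbn [firstn skipn app Nat.add]].
Ltac rw_at_rhs k m H := apply E_sym; rw_at k m H; apply E_sym.

Lemma uw_eq_cancel_r w : valid_word n c w -> uw_eq n c (w ++ winv w) [].
Proof.
  induction w as [|[g e] w IH]; intros H; [apply E_refl|].
  inversion H; subst.
  change (winv ((g, e) :: w)) with (winv w ++ [(g, negb e)]). simpl.
  apply E_trans with ([(g, e)] ++ [(g, negb e)]).
  - apply (uw_eq_app_l [(g, e)]). rewrite app_assoc.
    apply (uw_eq_app_r _ _ []), IH; assumption.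
  - exact (E_free n c [] [] g e H2).
Qed.

Lemma uw_eq_cancel_l w : valid_word n c w -> uw_eq n c (winv w ++ w) [].
Proof.
  intros H. rewrite <- (winv_involutive w) at 2. now apply uw_eq_cancel_r, valid_winv.
Qed.

Lemma uw_eq_cancel_mid_r x u y :
  valid_word n c u -> uw_eq n c (x ++ u ++ winv u ++ y) (x ++ y).
Proof.
  intros. apply uw_eq_app_l. rewrite app_assoc. now apply (uw_eq_app_r _ _ []), uw_eq_cancel_r.
Qed.

Lemma uw_eq_cancel_mid_l x u y :
  valid_word n c u -> uw_eq n c (x ++ winv u ++ u ++ y) (x ++ y).
Proof.
  intros. apply uw_eq_app_l. rewrite app_assoc. now apply (uw_eq_app_r _ _ []), uw_eq_cancel_l.
Qed.

Lemma uw_eq_winv a b :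
  valid_word n c a -> valid_word n c b -> uw_eq n c a b -> uw_eq n c (winv a) (winv b).
Proof.
  intros Ha Hb H.
  apply E_trans with (winv a ++ b ++ winv b).
  { rewrite <- (app_nil_r (winv a)) at 1. apply uw_eq_app_l, E_sym, uw_eq_cancel_r, Hb. }
  rewrite app_assoc. apply (uw_eq_app_r _ _ []).
  apply E_trans with (winv a ++ a); [apply uw_eq_app_l, E_sym, H | apply uw_eq_cancel_l, Ha].
Qed.

Lemma uw_eq_of_rel a b : uw_rel n c a b -> uw_eq n c a b.
Proof. intros H. rewrite <- (app_nil_r a), <- (app_nil_r b). exact (E_rel n c [] [] a b H). Qed.

Lemma uw_eq_free g e : valid_gen n c g -> uw_eq n c [(g, e); (g, negb e)] [].
Proof. exact (E_free n c [] [] g e). Qed.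

Lemma uw_eq_rho_sq i : 1 <= i <= n - 1 -> uw_eq n c [rho i; rho i] [].
Proof. intros. now apply uw_eq_of_rel, UW_uv, R_inv. Qed.

Lemma uw_eq_rho_inv i : 1 <= i <= n - 1 -> uw_eq n c [(Rho i, true)] [rho i].
Proof.
  intros H. rw_at 1 0 (E_sym _ _ _ _ (uw_eq_rho_sq i H)).
  rw_at 0 2 (uw_eq_free (Rho i) true H). apply E_refl.
Qed.

Lemma uw_eq_braid i :
  1 <= i -> i <= n - 2 -> uw_eq n c [rho i; rho (S i); rho i] [rho (S i); rho i; rho (S i)].
Proof. intros. now apply uw_eq_of_rel, UW_uv, R_braid. Qed.

Lemma uw_eq_rho_far i j :
  1 <= i <= n - 1 -> 1 <= j <= n - 1 -> (i + 2 <= j \/ j + 2 <= i) ->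
  uw_eq n c [rho i; rho j] [rho j; rho i].
Proof. intros. now apply uw_eq_of_rel, UW_uv, R_far. Qed.

Lemma uw_eq_sig_far i t j l :
  1 <= i <= n - 1 -> 1 <= j <= n - 1 -> (i + 2 <= j \/ j + 2 <= i) ->
  1 <= t <= c -> 1 <= l <= c -> uw_eq n c [sig i t; sig j l] [sig j l; sig i t].
Proof. intros. now apply uw_eq_of_rel, UW_uv, R_sfar. Qed.

Lemma uw_eq_sig_rho_far i t j :
  1 <= i <= n - 1 -> 1 <= j <= n - 1 -> (i + 2 <= j \/ j + 2 <= i) ->
  1 <= t <= c -> uw_eq n c [sig i t; rho j] [rho j; sig i t].
Proof. intros. now apply uw_eq_of_rel, UW_uv, R_mixfar. Qed.

Lemma uw_eq_rho_rho_sig i t :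
  1 <= i -> i <= n - 2 -> 1 <= t <= c ->
  uw_eq n c [rho i; rho (S i); sig i t] [sig (S i) t; rho i; rho (S i)].
Proof. intros. now apply uw_eq_of_rel, UW_uv, R_mix. Qed.

Section CommutatorSubgroup.

Variable H : word -> Prop.
Hypothesis H_valid : forall w, H w -> valid_word n c w.

Lemma comm_subgroup_uw_eq a b :
  comm_subgroup n c H a -> valid_word n c b -> uw_eq n c a b -> comm_subgroup n c H b.
Proof.
  intros [_ [ps [Hps Ea]]] Vb Eab. split; [exact Vb|].
  exists ps. split; [exact Hps|]. exact (E_trans _ _ _ _ _ (E_sym _ _ _ _ Eab) Ea).
Qed.

Lemma comm_subgroup_nil : comm_subgroup n c H [].
Proof. split; [constructor|]. exists []. split; [constructor | apply E_refl]. Qed.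

Lemma comm_subgroup_app a b :
  comm_subgroup n c H a -> comm_subgroup n c H b -> comm_subgroup n c H (a ++ b).
Proof.
  intros [Va [ps [Hps Ea]]] [Vb [qs [Hqs Eb]]]. split; [now apply valid_app|].
  exists (ps ++ qs). split; [now apply Forall_app|].
  rewrite flat_map_app. now apply uw_eq_app.
Qed.

Lemma valid_comm_prod ps :
  Forall (fun p => H (fst p) /\ H (snd p)) ps -> valid_word n c (comm_prod ps).
Proof.
  induction 1 as [|[a b] ps [Ha Hb] _ IH]; [constructor|].
  apply valid_app; [apply valid_comm|]; auto.
Qed.

Lemma comm_subgroup_comm a b : H a -> H b -> comm_subgroup n c H (comm a b).
Proof.
  intros Ha Hb. split; [apply valid_comm; auto|].
  exists [(a, b)]. split; [now repeat constructor|].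
  simpl. rewrite app_nil_r. apply E_refl.
Qed.

Lemma comm_subgroup_winv a : comm_subgroup n c H a -> comm_subgroup n c H (winv a).
Proof.
  intros [Va [ps [Hps Ea]]]. split; [now apply valid_winv|].
  exists (rev (map (fun p => (snd p, fst p)) ps)). split.
  - apply Forall_rev, Forall_map. eapply Forall_impl; [|exact Hps]. simpl. tauto.
  - change (uw_eq n c (winv a) (comm_prod (rev (map (fun p => (snd p, fst p)) ps)))).
    rewrite <- winv_comm_prod. apply uw_eq_winv; [exact Va | now apply valid_comm_prod | exact Ea].
Qed.

Lemma uw_eq_conj_comm u a b :
  valid_word n c u ->
  uw_eq n c (winv u ++ comm a b ++ u) (comm (winv u ++ a ++ u) (winv u ++ b ++ u)).
Proof.
  intros Vu. unfold comm. rewrite !winv_app, !winv_involutive, <- !app_assoc.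
  apply uw_eq_app_l, E_sym.
  do 3 (eapply E_trans; [apply uw_eq_cancel_mid_r, Vu | apply uw_eq_app_l]).
  apply E_refl.
Qed.

Lemma uw_eq_conj_comm_prod u ps :
  valid_word n c u ->
  uw_eq n c (winv u ++ comm_prod ps ++ u)
    (comm_prod (map (fun p => (winv u ++ fst p ++ u, winv u ++ snd p ++ u)) ps)).
Proof.
  intros Vu. induction ps as [|[a b] ps IH]; [now apply uw_eq_cancel_l|].
  change (comm_prod ((a, b) :: ps)) with (comm a b ++ comm_prod ps).
  apply E_trans with ((winv u ++ comm a b ++ u) ++ (winv u ++ comm_prod ps ++ u)).
  - rewrite <- !app_assoc. apply uw_eq_app_l, uw_eq_app_l, E_sym.
    exact (uw_eq_cancel_mid_r [] u _ Vu).
  - apply uw_eq_app; [apply uw_eq_conj_comm, Vu | exact IH].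
Qed.

Lemma comm_subgroup_conj a u :
  (forall w v, H w -> valid_word n c v -> H (winv v ++ w ++ v)) ->
  comm_subgroup n c H a -> valid_word n c u -> comm_subgroup n c H (winv u ++ a ++ u).
Proof.
  intros H_conj [Va [ps [Hps Ea]]] Vu. split.
  { apply valid_app; [|apply valid_app]; auto using valid_winv. }
  exists (map (fun p => (winv u ++ fst p ++ u, winv u ++ snd p ++ u)) ps). split.
  - apply Forall_map. eapply Forall_impl; [|exact Hps]. simpl. intros p []. auto.
  - eapply E_trans; [apply uw_eq_app_l, uw_eq_app_r, Ea | now apply uw_eq_conj_comm_prod].
Qed.

End CommutatorSubgroup.

Lemma comm_subgroup_mono (H H' : word -> Prop) w :
  (forall x, H x -> H' x) -> comm_subgroup n c H w -> comm_subgroup n c H' w.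
Proof.
  intros HH' [V [ps [Hps E]]]. split; [exact V|].
  exists ps. split; [|exact E]. eapply Forall_impl; [|exact Hps]. intros p []; auto.
Qed.

Lemma derived_valid w : derived n c w -> valid_word n c w.
Proof. now intros []. Qed.

Lemma derived_conj w v :
  derived n c w -> valid_word n c v -> derived n c (winv v ++ w ++ v).
Proof.
  intros. apply comm_subgroup_conj; auto.
  intros. apply valid_app; [|apply valid_app]; auto using valid_winv.
Qed.

Lemma derived2_conj w v :
  comm_subgroup n c (derived n c) w -> valid_word n c v ->
  comm_subgroup n c (derived n c) (winv v ++ w ++ v).
Proof. intros. apply comm_subgroup_conj; auto using derived_valid, derived_conj. Qed.

(* rho_a rho_(a+1) = [rho_a, rho_(a+1) rho_a] by the braid relation. *)
Lemma derived_rho_succ a : 1 <= a -> a <= n - 2 -> derived n c [rho a; rho (S a)].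
Proof.
  intros H1 H2. assert (Ha : 1 <= a <= n - 1) by lia. assert (Hb : 1 <= S a <= n - 1) by lia.
  eapply comm_subgroup_uw_eq; [| solve_valid |].
  { apply (comm_subgroup_comm _ (fun w Hw => Hw) [rho a] [rho (S a); rho a]); solve_valid. }
  unfold comm, winv; simpl.
  rw_at 0 1 (uw_eq_rho_inv a Ha). rw_at 1 1 (uw_eq_rho_inv a Ha).
  rw_at 2 1 (uw_eq_rho_inv (S a) Hb). rw_at 0 2 (uw_eq_rho_sq a Ha).
  rw_at 0 3 (E_sym _ _ _ _ (uw_eq_braid a H1 H2)). rw_at 2 2 (uw_eq_rho_sq a Ha).
  apply E_refl.
Qed.

Lemma derived_rho_1 b : 1 <= b <= n - 1 -> derived n c [rho 1; rho b].
Proof.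
  induction b as [|[|b] IH]; intros Hb; [lia| |].
  - eapply comm_subgroup_uw_eq; [apply comm_subgroup_nil | solve_valid |].
    apply E_sym, uw_eq_rho_sq. lia.
  - eapply comm_subgroup_uw_eq; [| solve_valid |].
    { apply (comm_subgroup_app _ [rho 1; rho (S b)] [rho (S b); rho (S (S b))]);
        [apply IH | apply derived_rho_succ]; lia. }
    simpl. rw_at 1 2 (uw_eq_rho_sq (S b) ltac:(lia)). apply E_refl.
Qed.

Lemma derived_rho_pair a b : 1 <= a <= n - 1 -> 1 <= b <= n - 1 -> derived n c [rho a; rho b].
Proof.
  intros Ha Hb.
  pose proof (comm_subgroup_winv _ (fun w H => H) _ (derived_rho_1 a Ha)) as H1.
  eapply comm_subgroup_uw_eq;
    [apply (comm_subgroup_app _ _ _ H1 (derived_rho_1 b Hb)) | solve_valid |].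
  unfold winv; simpl.
  rw_at 0 1 (uw_eq_rho_inv a Ha). rw_at 1 1 (uw_eq_rho_inv 1 ltac:(lia)).
  rw_at 1 2 (uw_eq_rho_sq 1 ltac:(lia)). apply E_refl.
Qed.

Definition dd_equiv (x y : word) : Prop := comm_subgroup n c (derived n c) (x ++ winv y).

Lemma dd_equiv_valid x y : dd_equiv x y -> valid_word n c x /\ valid_word n c y.
Proof.
  intros [V _]. apply valid_app_inv in V as [V1 V2]. split; [exact V1 | now apply valid_winv_inv].
Qed.

Lemma dd_equiv_nil w : dd_equiv w [] -> comm_subgroup n c (derived n c) w.
Proof. unfold dd_equiv. simpl. now rewrite app_nil_r. Qed.

Lemma dd_equiv_of_uw_eq x y :
  valid_word n c x -> valid_word n c y -> uw_eq n c x y -> dd_equiv x y.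
Proof.
  intros Vx Vy H. eapply comm_subgroup_uw_eq; [apply comm_subgroup_nil | |].
  - apply valid_app; auto using valid_winv.
  - eapply E_trans; [apply E_sym, uw_eq_cancel_r, Vy | apply uw_eq_app_r, E_sym, H].
Qed.

Lemma dd_equiv_refl x : valid_word n c x -> dd_equiv x x.
Proof. intros V. apply dd_equiv_of_uw_eq; auto using E_refl. Qed.

Lemma dd_equiv_sym x y : dd_equiv x y -> dd_equiv y x.
Proof.
  intros H. apply (comm_subgroup_winv _ derived_valid) in H.
  unfold dd_equiv. now rewrite winv_app, winv_involutive in H.
Qed.

Lemma dd_equiv_trans x y z : dd_equiv x y -> dd_equiv y z -> dd_equiv x z.
Proof.
  intros Hxy Hyz. destruct (dd_equiv_valid _ _ Hxy) as [Vx Vy].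
  destruct (dd_equiv_valid _ _ Hyz) as [_ Vz].
  eapply comm_subgroup_uw_eq; [apply (comm_subgroup_app _ _ _ Hxy Hyz) | |].
  - apply valid_app; auto using valid_winv.
  - rewrite <- app_assoc. apply uw_eq_cancel_mid_l, Vy.
Qed.

Lemma dd_equiv_app_l u x y : valid_word n c u -> dd_equiv x y -> dd_equiv (u ++ x) (u ++ y).
Proof.
  intros Vu H. pose proof (derived2_conj _ _ H (valid_winv _ Vu)) as H'.
  rewrite winv_involutive in H'. unfold dd_equiv.
  rewrite winv_app, <- !app_assoc in *. exact H'.
Qed.

Lemma dd_equiv_app_r v x y : valid_word n c v -> dd_equiv x y -> dd_equiv (x ++ v) (y ++ v).
Proof.
  intros Vv H. destruct (dd_equiv_valid _ _ H) as [Vx Vy].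
  eapply comm_subgroup_uw_eq; [exact H | |].
  - apply valid_app; [apply valid_app | apply valid_winv, valid_app]; auto.
  - rewrite winv_app, <- !app_assoc. apply E_sym, uw_eq_cancel_mid_r, Vv.
Qed.

Lemma dd_equiv_app a b a' b' : dd_equiv a b -> dd_equiv a' b' -> dd_equiv (a ++ a') (b ++ b').
Proof.
  intros H H'. destruct (dd_equiv_valid _ _ H) as [_ Vb].
  destruct (dd_equiv_valid _ _ H') as [Va' _].
  eapply dd_equiv_trans; [apply dd_equiv_app_r | apply dd_equiv_app_l]; eassumption.
Qed.

(* The commutator [rho_i rho_k, rho_(i+1) rho_k'], conjugated by rho_k rho_k'. *)
Lemma derived2_rho_succ_sq i k k' :
  1 <= i -> i <= n - 2 -> 1 <= k <= n - 1 -> 1 <= k' <= n - 1 ->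
  (k + 2 <= S i \/ S i + 2 <= k) -> (k' + 2 <= i \/ i + 2 <= k') ->
  (k = k' \/ k + 2 <= k' \/ k' + 2 <= k) ->
  comm_subgroup n c (derived n c) [rho i; rho (S i); rho i; rho (S i)].
Proof.
  intros Hi1 Hi2 Hk Hk' Hfk Hfk' Hkk.
  assert (Hi : 1 <= i <= n - 1) by lia. assert (Hs : 1 <= S i <= n - 1) by lia.
  pose proof (comm_subgroup_comm _ derived_valid [rho i; rho k] [rho (S i); rho k']
                (derived_rho_pair i k Hi Hk) (derived_rho_pair (S i) k' Hs Hk')) as H.
  eapply comm_subgroup_uw_eq; [| solve_valid |].
  { apply (derived2_conj _ [rho k; rho k'] H). solve_valid. }
  unfold comm, winv; simpl.
  rw_at 0 1 (uw_eq_rho_inv k' Hk'). rw_at 1 1 (uw_eq_rho_inv k Hk).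
  rw_at 2 1 (uw_eq_rho_inv k Hk). rw_at 3 1 (uw_eq_rho_inv i Hi).
  rw_at 4 1 (uw_eq_rho_inv k' Hk'). rw_at 5 1 (uw_eq_rho_inv (S i) Hs).
  rw_at 1 2 (uw_eq_rho_sq k Hk). rw_at 1 2 (uw_eq_rho_far i k' Hi Hk' ltac:(lia)).
  rw_at 0 2 (uw_eq_rho_sq k' Hk'). rw_at 3 2 (uw_eq_rho_far k (S i) Hk Hs Hfk).
  destruct Hkk as [<-|Hkk].
  - rw_at 4 2 (uw_eq_rho_sq k Hk). rw_at 4 2 (uw_eq_rho_sq k Hk). apply E_refl.
  - rw_at 5 2 (uw_eq_rho_far k' k Hk' Hk ltac:(lia)).
    rw_at 4 2 (uw_eq_rho_sq k Hk). rw_at 4 2 (uw_eq_rho_sq k' Hk'). apply E_refl.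
Qed.

Lemma dd_equiv_commute_inv g x :
  valid_gen n c g -> valid_gen n c (fst x) ->
  dd_equiv [(g, false); x] [x; (g, false)] -> dd_equiv [(g, true); x] [x; (g, true)].
Proof.
  intros Hg Hx H.
  assert (V : valid_word n c [(g, true)]) by (constructor; auto).
  pose proof (dd_equiv_app_r _ _ _ V (dd_equiv_app_l _ _ _ V H)) as H1. simpl in H1.
  apply dd_equiv_sym. eapply dd_equiv_trans; [|eapply dd_equiv_trans; [exact H1|]].
  - apply dd_equiv_of_uw_eq; [constructor; auto | repeat constructor; auto |].
    rw_at_rhs 0 2 (uw_eq_free g true Hg). apply E_refl.
  - apply dd_equiv_of_uw_eq; [repeat constructor; auto | constructor; auto |].
    rw_at 2 2 (uw_eq_free g false Hg). apply E_refl.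
Qed.

Section AtLeastFiveStrands.

Hypothesis n_ge5 : 5 <= n.

Lemma dd_equiv_rho_succ i : 1 <= i -> i <= n - 2 -> dd_equiv [rho i] [rho (S i)].
Proof.
  intros H1 H2. assert (Hi : 1 <= i <= n - 1) by lia. assert (Hs : 1 <= S i <= n - 1) by lia.
  assert (Hsq : comm_subgroup n c (derived n c) [rho i; rho (S i); rho i; rho (S i)]).
  { destruct (Nat.eq_dec i 1) as [->|Hne]; [apply (derived2_rho_succ_sq 1 4 4); lia|].
    destruct (le_lt_dec i (n - 3)).
    - apply (derived2_rho_succ_sq i (i - 1) (i + 2)); lia.
    - apply (derived2_rho_succ_sq i (i - 2) (i - 2)); lia. }
  eapply comm_subgroup_uw_eq; [apply (comm_subgroup_app _ _ _ Hsq Hsq) | solve_valid |].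
  simpl. rw_at 0 3 (uw_eq_braid i H1 H2). rw_at 2 2 (uw_eq_rho_sq (S i) Hs).
  rw_at 1 2 (uw_eq_rho_sq i Hi). rw_at 0 2 (uw_eq_rho_sq (S i) Hs).
  rw_at_rhs 1 1 (uw_eq_rho_inv (S i) Hs). apply E_refl.
Qed.

Lemma dd_equiv_rho_1 i : 1 <= i <= n - 1 -> dd_equiv [rho i] [rho 1].
Proof.
  induction i as [|[|i] IH]; intros Hi; [lia | now apply dd_equiv_refl; solve_valid |].
  eapply dd_equiv_trans; [apply dd_equiv_sym, dd_equiv_rho_succ | apply IH]; lia.
Qed.

Lemma dd_equiv_sig_succ i t :
  1 <= i -> i <= n - 2 -> 1 <= t <= c -> dd_equiv [sig i t] [sig (S i) t].
Proof.
  intros H1 H2 Ht.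
  assert (Hrr : dd_equiv [rho i; rho (S i)] []).
  { eapply dd_equiv_trans.
    - apply (dd_equiv_app_r [rho (S i)] [rho i] [rho (S i)]); [solve_valid|].
      apply dd_equiv_rho_succ; lia.
    - apply dd_equiv_of_uw_eq; [solve_valid | solve_valid | apply uw_eq_rho_sq; lia]. }
  pose proof (dd_equiv_app_r [sig i t] _ _ ltac:(solve_valid) Hrr) as Hl.
  pose proof (dd_equiv_app_l [sig (S i) t] _ _ ltac:(solve_valid) Hrr) as Hr.
  rewrite app_nil_r in Hr.
  eapply dd_equiv_trans; [apply dd_equiv_sym, Hl|]. eapply dd_equiv_trans; [|exact Hr].
  apply dd_equiv_of_uw_eq; [solve_valid | solve_valid | now apply uw_eq_rho_rho_sig].
Qed.

Lemma dd_equiv_sig_1 i t : 1 <= i <= n - 1 -> 1 <= t <= c -> dd_equiv [sig i t] [sig 1 t].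
Proof.
  intros Hi Ht. induction i as [|[|i] IH]; [lia | now apply dd_equiv_refl; solve_valid |].
  eapply dd_equiv_trans; [apply dd_equiv_sym, dd_equiv_sig_succ | apply IH]; lia.
Qed.

Definition gen_at (k : nat) (g : gen) : gen :=
  match g with Rho _ => Rho k | Sig _ t => Sig k t end.

Lemma dd_equiv_gen_at g k :
  1 <= k <= n - 1 -> valid_gen n c g -> dd_equiv [(g, false)] [(gen_at k g, false)].
Proof.
  intros Hk Hg. destruct g as [i|i t]; simpl in Hg.
  - eapply dd_equiv_trans; [|apply dd_equiv_sym]; apply dd_equiv_rho_1; lia.
  - eapply dd_equiv_trans; [|apply dd_equiv_sym]; apply dd_equiv_sig_1; lia.
Qed.

Lemma dd_equiv_gen_commute g h :
  valid_gen n c g -> valid_gen n c h ->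
  dd_equiv [(g, false); (h, false)] [(h, false); (g, false)].
Proof.
  intros Hg Hh.
  pose proof (dd_equiv_gen_at g 1 ltac:(lia) Hg) as G1.
  pose proof (dd_equiv_gen_at h 3 ltac:(lia) Hh) as H3.
  eapply dd_equiv_trans; [exact (dd_equiv_app _ _ _ _ G1 H3)|].
  eapply dd_equiv_trans; [|apply dd_equiv_sym; exact (dd_equiv_app _ _ _ _ H3 G1)].
  apply dd_equiv_of_uw_eq; destruct g as [i|i t], h as [j|j l]; simpl in *; try solve_valid.
  - apply uw_eq_rho_far; lia.
  - apply E_sym, uw_eq_sig_rho_far; lia.
  - apply uw_eq_sig_rho_far; lia.
  - apply uw_eq_sig_far; lia.
Qed.

Lemma dd_equiv_letter_commute l1 l2 :
  valid_gen n c (fst l1) -> valid_gen n c (fst l2) -> dd_equiv [l1; l2] [l2; l1].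
Proof.
  destruct l1 as [g e1], l2 as [h e2]. simpl. intros Hg Hh.
  assert (Hpos : dd_equiv [(g, e1); (h, false)] [(h, false); (g, e1)]).
  { destruct e1; [apply dd_equiv_commute_inv|]; auto using dd_equiv_gen_commute. }
  apply dd_equiv_sym. destruct e2; [apply dd_equiv_commute_inv|]; auto using dd_equiv_sym.
Qed.

Lemma dd_equiv_letter_word l b :
  valid_gen n c (fst l) -> valid_word n c b -> dd_equiv (l :: b) (b ++ [l]).
Proof.
  intros Hl Hb. induction Hb as [|x b Hx Hb IH]; [apply dd_equiv_refl; now constructor|].
  eapply dd_equiv_trans.
  - apply (dd_equiv_app_r b [l; x] [x; l]); [exact Hb | now apply dd_equiv_letter_commute].
  - apply (dd_equiv_app_l [x]); [now constructor | exact IH].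
Qed.

Lemma dd_equiv_word_commute a b :
  valid_word n c a -> valid_word n c b -> dd_equiv (a ++ b) (b ++ a).
Proof.
  intros Ha Hb. induction Ha as [|l a Hl Ha IH]; [rewrite app_nil_r; now apply dd_equiv_refl|].
  eapply dd_equiv_trans; [apply (dd_equiv_app_l [l]); [now constructor | exact IH]|].
  change ([l] ++ b ++ a) with ((l :: b) ++ a).
  replace (b ++ l :: a) with ((b ++ [l]) ++ a) by now rewrite <- app_assoc.
  apply dd_equiv_app_r; [exact Ha | now apply dd_equiv_letter_word].
Qed.

Lemma dd_equiv_comm_nil a b : valid_word n c a -> valid_word n c b -> dd_equiv (comm a b) [].
Proof.
  intros Ha Hb. unfold comm. rewrite app_assoc.
  eapply dd_equiv_trans; [apply dd_equiv_app_l|].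
  { apply valid_app; now apply valid_winv. }
  { now apply dd_equiv_word_commute. }
  apply dd_equiv_of_uw_eq; [repeat apply valid_app; auto using valid_winv | constructor |].
  rewrite <- app_assoc. eapply E_trans; [apply uw_eq_cancel_mid_l, Hb | apply uw_eq_cancel_l, Ha].
Qed.

Lemma dd_equiv_comm_prod_nil ps :
  Forall (fun p => valid_word n c (fst p) /\ valid_word n c (snd p)) ps ->
  dd_equiv (comm_prod ps) [].
Proof.
  induction 1 as [|[a b] ps [Ha Hb] _ IH]; [apply dd_equiv_refl; constructor|].
  apply (dd_equiv_app _ [] _ []); [now apply dd_equiv_comm_nil | exact IH].
Qed.

End AtLeastFiveStrands.

End UniversalWeldedBraidGroup.

Theorem theorem5p8 (n c : nat) (hn : 5 <= n) (hc : 1 <= c) :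
  forall w : word, comm_subgroup n c (derived n c) w <-> derived n c w.
Proof.
  intros w. split.
  - apply comm_subgroup_mono, derived_valid.
  - intros [Vw [ps [Hps E]]].
    apply dd_equiv_nil. eapply dd_equiv_trans; [|exact (dd_equiv_comm_prod_nil n c hn ps Hps)].
    apply dd_equiv_of_uw_eq; [exact Vw | | exact E].
    exact (valid_comm_prod n c _ (fun w Hw => Hw) ps Hps).
Qed.
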